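(* Let $G$ and $H$ be two connected graphs with $\mathrm{toi}(G)=3$ and $\mathrm{toi}(H)=2$. Then $\mathrm{toi}(G \square H) \geq 3$. Furthermore, equality holds when $G=K_3$ and $H=K_2$. In general, if $H$ is not isomorphic to $K_2$, then $\mathrm{toi}(G \square H) \geq 4$.
   Context: $\mathrm{toi}(G)$ is the maximum $t$ such that $G$ contains a totally odd strong immersion of $K_t$ (an injective map of $V(K_t)$ into $V(G)$ with pairwise edge-disjoint odd paths joining each pair of terminals, no terminal being an interior vertex of any path). $G\square H$ is the Cartesian product: vertex set $V(G)\times V(H)$, with $(g_1,h_1)\sim(g_2,h_2)$ iff ($g_1=g_2$ and $h_1h_2\in E(H)$) or ($h_1=h_2$ and $g_1g_2\in E(G)$). *)

From Stdlib Require Import ClassicalEpsilon.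
From mathcomp Require Import all_boot.
Set Implicit Arguments. Unset Strict Implicit. Unset Printing Implicit Defensive.

Record sgraph := SGraph {
  vert :> finType;
  adj : rel vert;
  adj_sym : symmetric adj;
  adj_irr : irreflexive adj }.

Definition connected (G : sgraph) : Prop :=
  forall x y : G, connect (@adj G) x y.

Definition isomorphic (G H : sgraph) : Prop :=
  exists f : G -> H, bijective f /\ forall x y, adj (f x) (f y) = adj x y.

Definition Kadj n : rel 'I_n := fun i j => i != j.
Lemma Kadj_sym n : symmetric (@Kadj n).
Proof. by move=> i j; rewrite /Kadj eq_sym. Qed.
Lemma Kadj_irr n : irreflexive (@Kadj n).
Proof. by move=> i; rewrite /Kadj eqxx. Qed.
Definition K n : sgraph := SGraph (@Kadj_sym n) (@Kadj_irr n).

Definition cart_adj (G H : sgraph) : rel (G * H)%type :=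
  fun u v => ((u.1 == v.1) && adj u.2 v.2) || ((u.2 == v.2) && adj u.1 v.1).
Lemma cart_adj_sym G H : symmetric (@cart_adj G H).
Proof.
by move=> u v; rewrite /cart_adj (eq_sym u.1) (eq_sym u.2) (adj_sym u.1) (adj_sym u.2).
Qed.
Lemma cart_adj_irr G H : irreflexive (@cart_adj G H).
Proof. by move=> u; rewrite /cart_adj !adj_irr !andbF. Qed.
Definition cart (G H : sgraph) : sgraph :=
  SGraph (@cart_adj_sym G H) (@cart_adj_irr G H).

(* A path from x to y is given by the list p of vertices after x:
   the vertex sequence is x :: p, consecutive vertices adjacent, all distinct,
   ending at y. Its length (number of edges) is size p. *)
Definition is_path (G : sgraph) (x y : G) (p : seq G) : bool :=
  [&& path (@adj G) x p, uniq (x :: p) & last x p == y].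

Definition path_edges (G : sgraph) (x : G) (p : seq G) : seq {set G} :=
  [seq [set e.1; e.2] | e <- zip (x :: p) p].

Definition interior (G : sgraph) (x : G) (p : seq G) : seq G :=
  behead (belast x p).

(* Totally odd strong immersion of K_t in G: injective terminal map f and,
   for every pair i < j, an odd path P i j from f i to f j; paths for
   distinct pairs are edge-disjoint; no terminal is an interior vertex of
   any path. *)
Definition toi_immersion (G : sgraph) (t : nat) : Prop :=
  exists (f : 'I_t -> G) (P : 'I_t -> 'I_t -> seq G),
    injective f /\
    (forall i j : 'I_t, i < j ->
       is_path (f i) (f j) (P i j) /\ odd (size (P i j))) /\
    (forall i j k l : 'I_t, i < j -> k < l -> (i, j) != (k, l) ->
       forall e, e \in path_edges (f i) (P i j) ->
                 e \notin path_edges (f k) (P k l)) /\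
    (forall i j k : 'I_t, i < j -> f k \notin interior (f i) (P i j)).

Definition decP (P : Prop) : bool :=
  if excluded_middle_informative P then true else false.

(* toi G: the maximum t with a totally odd strong immersion of K_t in G
   (t <= #|G| since the terminal map is injective). *)
Definition toi (G : sgraph) : nat :=
  \max_(t < #|G|.+1 | decP (toi_immersion G t)) t.

(* Each layer G x {h} of G □ H is a copy of G, and totally odd immersions are
   carried along injective homomorphisms, so toi (G □ H) >= toi G.

   If toi G = 3, concatenating the three odd paths of an immersion of K_3 gives
   an odd closed walk, hence an odd cycle a, m, c, b of G.  If H is connected,
   has an edge and is not K_2, it contains a path h1 h2 h3.  The terminals
   A = (a,h1), B = (a,h2), C = (b,h1), D = (c,h1) of G □ H are then joined by
   six edge-disjoint odd paths: the edges AB, AC, CD, the arc a m c of the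
   cycle in layer h1 (for AD), the arc a m c b in layer h2 followed by the edge
   down to C (for BC), and the detour through layer h3 and the fibre of c
   (for BD).

   In the prism K_3 □ K_2 four terminals leave only two other vertices, so an
   odd path between two non-adjacent terminals must pass through both of them
   and use the edge they span.  Any four vertices of the prism contain two
   non-adjacent pairs, so two paths of an immersion of K_4 would share an
   edge. *)

From Pilot Require Import Defs.
From Stdlib Require Import ClassicalEpsilon.
From mathcomp Require Import all_boot zify.
Set Implicit Arguments. Unset Strict Implicit. Unset Printing Implicit Defensive.

Lemma adj_neq (G : sgraph) (x y : G) : adj x y -> x != y.
Proof. by apply: contraTneq => ->; rewrite adj_irr. Qed.

Definition odd_path (G : sgraph) (x y : G) (p : seq G) := is_path x y p && odd (size p).

Lemma odd_path_edge (G : sgraph) (x y : G) : adj x y -> odd_path x y [:: y].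
Proof. by move=> xy; rewrite /odd_path /is_path /= xy !inE (adj_neq xy) eqxx. Qed.

Lemma is_path_rcons (G : sgraph) (x y z : G) p :
  is_path x y p -> adj y z -> z \notin x :: p -> is_path x z (rcons p z).
Proof.
case/and3P=> path_p uniq_p /eqP last_p yz z_p.
by rewrite /is_path rcons_path path_p last_p yz -rcons_cons rcons_uniq z_p uniq_p last_rcons /=.
Qed.

Lemma interior_rcons (G : sgraph) (x y : G) p : interior x (rcons p y) = p.
Proof. by rewrite /interior belast_rcons. Qed.

Lemma mem_zip (S T : eqType) (s : seq S) (t : seq T) x y :
  (x, y) \in zip s t -> (x \in s) && (y \in t).
Proof.
elim: s t => [|x' s IH] [|y' t] //=.
by rewrite !in_cons => /orP [/eqP [-> ->] | /IH /andP [-> ->]]; rewrite ?eqxx ?orbT.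
Qed.

Lemma disjoint_seq (T : finType) (s t : seq T) :
  (forall x, x \in s -> x \in t -> False) -> [disjoint s & t].
Proof. by move=> st; rewrite disjoint_has; apply/hasPn => x /st xt; apply/negP. Qed.

Lemma path_edges_disjoint (G : sgraph) (x y : G) p q :
  all (fun uv : G * G => (uv.1 \notin y :: q) || (uv.2 \notin y :: q)) (zip (x :: p) p) ->
  [disjoint path_edges x p & path_edges y q].
Proof.
move=> /allP no_common_edge; rewrite disjoint_has; apply/hasPn => _ /mapP [[u v] uv ->].
apply/mapP => -[[u' v'] /mem_zip /andP [u'q v'q] /= E].
have in_q w : w \in [set u; v] -> w \in y :: q.
  by rewrite E => /set2P [] ->; rewrite ?u'q // in_cons v'q orbT.
by case/orP: (no_common_edge _ uv) => /negP []; apply: in_q; rewrite !inE eqxx ?orbT.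
Qed.

Lemma path_edges_disjoint_vertices (G : sgraph) (x y : G) p q :
  [disjoint x :: p & y :: q] -> [disjoint path_edges x p & path_edges y q].
Proof.
move=> disj; apply: path_edges_disjoint; apply/allP => -[u v] /mem_zip /andP [u_p _].
by rewrite /= (disjointFr disj u_p).
Qed.

Lemma decPP (P : Prop) : reflect P (Defs.decP P).
Proof. by rewrite /Defs.decP; case: excluded_middle_informative => ?; constructor. Qed.

Section TotallyOddImmersion.
Variable G : sgraph.

Lemma toi_immersion0 : toi_immersion G 0.
Proof.
have f : 'I_0 -> G by case.
by exists f, (fun _ _ => [::]); split; [|split; [|split]]; case.
Qed.

Lemma toi_immersion_leq s t : s <= t -> toi_immersion G t -> toi_immersion G s.
Proof.
move=> le_st [f [P [finj [Hp [Hd Hi]]]]].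
exists (fun i => f (widen_ord le_st i)), (fun i j => P (widen_ord le_st i) (widen_ord le_st j)).
split; first by move=> i j /finj /(congr1 val) eq_ij; apply: val_inj.
split; first by move=> i j ij; apply: Hp.
split; last by move=> i j k ij; apply: Hi.
by move=> i j k l ij kl ne; apply: Hd.
Qed.

Lemma toi_immersion_leq_toi t : toi_immersion G t -> t <= toi G.
Proof.
move=> Ht; have t_small : t < #|G|.+1.
  by case: Ht => f [_ [finj _]]; rewrite ltnS -[t]card_ord (leq_card _ finj).
by apply: (@leq_bigmax_cond _ _ _ (Ordinal t_small)); apply/decPP.
Qed.

Lemma toi_immersion_toi : toi_immersion G (toi G).
Proof.
rewrite /toi; set A := (fun i : 'I_#|G|.+1 => Defs.decP (toi_immersion G i)).
have : 0 < #|A| by apply/card_gt0P; exists ord0; apply/decPP/toi_immersion0.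
by case/(eq_bigmax_cond (fun i : 'I_#|G|.+1 => nat_of_ord i)) => i /decPP Ai ->.
Qed.

Lemma toi_immersionP t : toi_immersion G t <-> t <= toi G.
Proof.
split; first exact: toi_immersion_leq_toi.
by move=> le_t; apply: toi_immersion_leq le_t toi_immersion_toi.
Qed.

End TotallyOddImmersion.

(* The position of the pair (i, j), i < j < 4, in the list [ps] below. *)
Definition pair_index4 (i j : nat) : nat :=
  match i, j with 0, 1 => 0 | 0, 2 => 1 | 0, 3 => 2 | 1, 2 => 3 | 1, 3 => 4 | _, _ => 5 end.

Lemma pair_index4_lt (i j : nat) : pair_index4 i j < 6.
Proof. by case: i => [|[|[|i]]]; case: j => [|[|[|[|j]]]]. Qed.

Lemma pair_index4_inj (i j k l : 'I_4) : i < j -> k < l ->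
  pair_index4 i j = pair_index4 k l -> (i, j) = (k, l).
Proof.
move=> ij kl eq_ijkl; apply/eqP; rewrite xpair_eqE -!(inj_eq val_inj).
move: ij kl eq_ijkl.
by case: i j k l => [[|[|[|[|?]]]] ?] [[|[|[|[|?]]]] ?] [[|[|[|[|?]]]] ?] [[|[|[|[|?]]]] ?].
Qed.

Lemma toi_immersion4 (G : sgraph) (x0 x1 x2 x3 : G) (p01 p02 p03 p12 p13 p23 : seq G) :
  let xs := [:: x0; x1; x2; x3] in
  let ps := [:: (x0, x1, p01); (x0, x2, p02); (x0, x3, p03);
                (x1, x2, p12); (x1, x3, p13); (x2, x3, p23)] in
  uniq xs -> all (fun t => odd_path t.1.1 t.1.2 t.2) ps ->
  pairwise (fun s t => [disjoint path_edges s.1.1 s.2 & path_edges t.1.1 t.2]) ps ->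
  all (fun t => [disjoint xs & interior t.1.1 t.2]) ps ->
  toi_immersion G 4.
Proof.
move=> xs ps uniq_xs odd_ps disj_ps int_ps.
pose path_of (i j : 'I_4) := nth (x0, x0, [::]) ps (pair_index4 i j).
pose edges (t : G * G * seq G) := path_edges t.1.1 t.2.
have ends (i j : 'I_4) : i < j -> (path_of i j).1 = (nth x0 xs i, nth x0 xs j).
  by case: i j => [[|[|[|[|?]]]] ?] [[|[|[|[|?]]]] ?].
have in_ps (i j : 'I_4) : path_of i j \in ps by rewrite mem_nth ?pair_index4_lt.
exists (nth x0 xs), (fun i j => (path_of i j).2); split.
  by move=> i j /eqP; rewrite nth_uniq // => /eqP /val_inj.
split.
  by move=> i j ij; have /andP := allP odd_ps _ (in_ps i j); rewrite ends.
split; last first.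
  move=> i j k ij; have := allP int_ps _ (in_ps i j); rewrite /= ends //= => /disjointFr.
  by move/(_ (nth x0 xs k)); rewrite mem_nth // => ->.
move=> i j k l ij kl ne e.
have -> : nth x0 xs i = (path_of i j).1.1 by rewrite ends.
have -> : nth x0 xs k = (path_of k l).1.1 by rewrite ends.
suff : [disjoint edges (path_of i j) & edges (path_of k l)] by move/disjointFr=> /[apply] ->.
have neq : pair_index4 i j != pair_index4 k l.
  by apply: contra ne => /eqP /pair_index4_inj -> //.
have /pairwiseP disj := disj_ps; rewrite /path_of.
case: ltngtP neq => // lt _; last rewrite disjoint_sym; apply: disj lt;
  by rewrite inE /= pair_index4_lt.
Qed.

Section InjectiveHomomorphism.
Variables (G G' : sgraph) (phi : G -> G').
Hypotheses (phi_inj : injective phi) (phi_adj : {homo phi : x y / adj x y}).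

Lemma map_path_hom x p : path (@adj G) x p -> path (@adj G') (phi x) (map phi p).
Proof. by elim: p x => //= y p IH x /andP [/phi_adj -> /IH]. Qed.

Lemma is_path_map x y p : is_path x y p -> is_path (phi x) (phi y) (map phi p).
Proof.
case/and3P=> path_p uniq_p /eqP <-.
by rewrite /is_path map_path_hom // -map_cons (map_inj_uniq phi_inj) uniq_p last_map eqxx.
Qed.

Lemma path_edges_map x p :
  path_edges (phi x) (map phi p) = map (fun e : {set G} => phi @: e) (path_edges x p).
Proof.
elim: p x => //= y p IH x.
by rewrite /path_edges /= imsetU !imset_set1 -[in RHS]/(path_edges y p) -IH.
Qed.

Lemma interior_map x p : interior (phi x) (map phi p) = map phi (interior x p).
Proof. by rewrite /interior belast_map; case: (belast x p). Qed.

Lemma toi_immersion_inj_hom t : toi_immersion G t -> toi_immersion G' t.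
Proof.
case=> f [P [finj [Hp [Hd Hi]]]].
exists (fun i => phi (f i)), (fun i j => map phi (P i j)).
split; first by move=> i j /phi_inj /finj.
split.
  by move=> i j ij; have [/is_path_map ? ?] := Hp i j ij; rewrite size_map.
split; last by move=> i j k ij; rewrite /= interior_map (mem_map phi_inj) Hi.
move=> i j k l ij kl ne e; rewrite !path_edges_map => /mapP [e1 e1P ->].
apply/mapP => -[e2 e2P /(imset_inj phi_inj) e12].
by move: (Hd i j k l ij kl ne e1 e1P); rewrite e12 e2P.
Qed.

Lemma toi_leq_inj_hom : toi G <= toi G'.
Proof. exact/toi_immersionP/toi_immersion_inj_hom/toi_immersion_toi. Qed.

End InjectiveHomomorphism.

Definition layer (G H : sgraph) (h : H) (g : G) : cart G H := (g, h).

Lemma layer_inj (G H : sgraph) (h : H) : injective (@layer G H h).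
Proof. by move=> x y [->]. Qed.

Lemma layer_adj (G H : sgraph) (h : H) : {homo @layer G H h : x y / adj x y}.
Proof. by move=> x y xy; rewrite /= /cart_adj /= eqxx xy orbT. Qed.

Lemma mem_map_layer (G H : sgraph) (h : H) (s : seq G) (u : cart G H) :
  (u \in map (layer h) s) = (u.2 == h) && (u.1 \in s).
Proof.
case: u => g k /=; apply/mapP/andP => [[g' g's [-> ->]] | [/eqP -> gs]] //.
by exists g.
Qed.

Lemma toi_leq_cart (G H : sgraph) (h : H) : toi G <= toi (cart G H).
Proof. exact: toi_leq_inj_hom (@layer_inj G H h) (@layer_adj G H h). Qed.

Lemma toi_immersion_K n : toi_immersion (K n) n.
Proof.
exists id, (fun _ j => [:: j]); split=> //; split.
  by move=> i j ij; apply/andP/odd_path_edge; rewrite /= /Kadj -(inj_eq val_inj) (ltn_eqF ij).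
split=> // i j k l ij kl ne e; rewrite /path_edges /= !inE => /eqP -> {e}.
apply: contra ne => /eqP E.
have : i \in [set k; l] by rewrite -E !inE eqxx.
have : j \in [set k; l] by rewrite -E !inE eqxx orbT.
have : k \in [set i; j] by rewrite E !inE eqxx.
move: ij kl; rewrite !inE xpair_eqE -!(inj_eq val_inj) /=.
by move: (val i) (val j) (val k) (val l); lia.
Qed.

Lemma toi_edge (G : sgraph) : 2 <= toi G -> exists u v : G, adj u v.
Proof.
case/toi_immersionP=> f [P [_ [Hp _]]].
have [/and3P [path01 _ _] odd01] := Hp ord0 (@Ordinal 2 1 isT) isT.
by move: path01 odd01; case: (P _ _) => // v q /= /andP [uv _] _; exists (f ord0), v.
Qed.

(** * Odd cycles and paths of length two *)

Lemma not_uniq_split (T : eqType) (s : seq T) :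
  ~~ uniq s -> exists s1 v s2 s3, s = s1 ++ v :: s2 ++ v :: s3.
Proof.
elim: s => //= y s IH; rewrite negb_and negbK => /orP [ys | /IH [s1 [v [s2 [s3 ->]]]]].
  by case/splitPr: ys => s2 s3; exists [::], y, s2, s3.
by exists (y :: s1), v, s2, s3.
Qed.

Section OddClosedWalk.
Variable G : sgraph.

Definition odd_closed_walk (x : G) (p : seq G) :=
  [&& path (@adj G) x p, last x p == x & odd (size p)].

(* A repeated vertex splits the walk into two shorter closed walks, one of them odd. *)
Lemma odd_closed_walk_uniq x p :
  odd_closed_walk x p -> exists y q, odd_closed_walk y q && uniq q.
Proof.
move: {2}(size p) (leqnn (size p)) => n; elim: n x p => [|n IH] x p.
  by rewrite leqn0 => /nilP -> /and3P [].
move=> size_p walk_p.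
have [uniq_p | /not_uniq_split [p1 [v [p2 [p3 def_p]]]]] := boolP (uniq p).
  by exists x, p; rewrite walk_p.
move: walk_p size_p; rewrite /odd_closed_walk def_p.
rewrite !(cat_path, last_cat, size_cat) /= !(cat_path, last_cat, size_cat) /=.
move=> /and3P [/and5P [x_p1 p1_v v_p2 p2_v v_p3] last_x odd_p] size_p.
have [odd_p2 | even_p2] := boolP (odd (size p2).+1).
  apply: (IH v (rcons p2 v)); first by rewrite size_rcons; lia.
  by rewrite /odd_closed_walk rcons_path v_p2 p2_v last_rcons eqxx size_rcons.
apply: (IH x (p1 ++ v :: p3)); first by rewrite size_cat /=; lia.
rewrite /odd_closed_walk cat_path /= x_p1 p1_v v_p3 last_cat /= last_x size_cat /=.
by move: odd_p even_p2; rewrite !oddD /= oddD /=; do 3!case: odd.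
Qed.

Lemma odd_cycle_of_closed_walk x p : odd_closed_walk x p ->
  exists a b c (m : seq G), [&& uniq [:: a, b, c & m], path (@adj G) a (rcons m c),
                               adj c b, adj b a & ~~ odd (size m)].
Proof.
case/odd_closed_walk_uniq => y [q /andP [walk_q uniq_q]].
move: walk_q uniq_q; case/lastP: q => [|q a]; first by case/and3P.
case/lastP: q => [|q b].
  by case/and3P => /= /andP [ya _] /eqP yy; rewrite yy adj_irr in ya.
case/lastP: q => [|m c]; first by case/and3P.
rewrite /odd_closed_walk !rcons_path !last_rcons !size_rcons /=.
case/and3P=> /andP [/andP [/andP [path_m m_c] c_b] b_a] /eqP a_y odd_m uniq_q; subst a.
rewrite negbK in odd_m.
have uniq_cycle : uniq [:: y, b, c & m].
  rewrite -(perm_uniq (_ : perm_eq (rcons (rcons (rcons m c) b) y) _)) //.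
  by rewrite !perm_rcons /= perm_cons !perm_rcons /= perm_cons perm_rcons.
exists y, b, c, m; apply/and5P; split=> //.
by rewrite rcons_path path_m m_c.
Qed.

Lemma toi_immersion3_odd_closed_walk :
  toi_immersion G 3 -> exists (x : G) p, odd_closed_walk x p.
Proof.
case=> f [P [_ [Hp _]]].
pose i0 := @Ordinal 3 0 isT; pose i1 := @Ordinal 3 1 isT; pose i2 := @Ordinal 3 2 isT.
have [/and3P [path01 _ /eqP last01] odd01] := Hp i0 i1 isT.
have [/and3P [path12 _ /eqP last12] odd12] := Hp i1 i2 isT.
have [/and3P [path02 _ /eqP last02] odd02] := Hp i0 i2 isT.
exists (f i0), (P i0 i1 ++ P i1 i2 ++ rev (belast (f i0) (P i0 i2))); apply/and3P; split.
- rewrite !cat_path path01 last01 path12 last12 /= -last02 rev_path.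
  by rewrite (eq_path (e' := @adj G)) // => x y; rewrite adj_sym.
- rewrite !last_cat last01 last12; move: odd02 last02; case: (P i0 i2) => //= y q _ _.
  by rewrite rev_cons last_rcons.
- by rewrite !size_cat size_rev size_belast !oddD odd01 odd12 odd02.
Qed.

End OddClosedWalk.

Lemma path_exit (G : sgraph) (S : {pred G}) x p :
  x \in S -> last x p \notin S -> path (@adj G) x p ->
  exists z y, [&& z \in S, y \notin S & adj z y].
Proof.
elim: p x => [|y p IH] x /= xS; first by rewrite xS.
move=> last_p /andP [xy path_p]; have [yS | yNS] := boolP (y \in S).
  exact: IH yS last_p path_p.
by exists x, y; rewrite xS yNS xy.
Qed.

Lemma isomorphic_K2 (H : sgraph) (u v : H) :
  adj u v -> (forall x, (x == u) || (x == v)) -> isomorphic H (K 2).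
Proof.
move=> uv uvT; have vu : v != u by rewrite eq_sym adj_neq.
pose phi x : K 2 := if x == u then ord0 else ord_max.
pose psi (i : K 2) := if i == ord0 then u else v.
have phiK : cancel phi psi.
  move=> x; rewrite /phi /psi; case: (eqVneq x u) => [-> | xu]; rewrite ?eqxx //=.
  by move: (uvT x); rewrite (negbTE xu) => /eqP.
have psiK : cancel psi phi.
  move=> i; rewrite /psi /phi; case: (eqVneq i ord0) => [-> | i0]; rewrite ?eqxx //.
  by rewrite (negbTE vu); apply/val_inj; case: i i0 => -[|[|m]] //.
exists phi; split; first by exists psi.
move=> x y; case/orP: (uvT x) => /eqP ->; case/orP: (uvT y) => /eqP ->;
  by rewrite /phi ?eqxx ?(negbTE vu) ?adj_irr // /= /Kadj; rewrite ?uv ?(adj_sym v u) ?uv.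
Qed.

Lemma connected_path3 (H : sgraph) (u v : H) :
  connected H -> adj u v -> ~ isomorphic H (K 2) ->
  exists h1 h2 h3 : H, [&& adj h1 h2, adj h2 h3 & h1 != h3].
Proof.
move=> conH uv notK2.
have [w /andP [wu wv] | uvT] := pickP (fun w => (w != u) && (w != v)); last first.
  case: notK2; apply: isomorphic_K2 uv _ => x.
  by move: (uvT x) => /= /negbT; rewrite negb_and !negbK.
have /connectP [p path_p last_p] := conH u w.
have [|||z [y /and3P [zuv yuv zy]]] := @path_exit H [pred x | (x == u) || (x == v)] u p.
- by rewrite !inE eqxx.
- by rewrite -last_p !inE negb_or wu.
- by [].
move: zuv yuv zy; rewrite !inE negb_or => /orP [] /eqP -> /andP [yu yv] zy.
  by exists v, u, y; rewrite adj_sym uv zy eq_sym.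
by exists u, v, y; rewrite uv zy eq_sym yu.
Qed.

(** * An immersion of K_4 in G □ H *)

Ltac crush_membership :=
  repeat match goal with
  | H : is_true (?x != ?x) |- _ => by have := H; rewrite eqxx
  | H : is_true (?x \in ?s), H' : is_true (?x \notin ?s) |- _ => by have := H'; rewrite H
  | H : is_true (_ \in [::]) |- _ => by rewrite in_nil in H
  | H : is_true (_ \in _ :: _) |- _ => rewrite in_cons in H
  | H : is_true (_ \in rcons _ _) |- _ => rewrite mem_rcons in H
  | H : is_true (_ \in map (layer _) _) |- _ => rewrite mem_map_layer /= in H
  | H : is_true (_ || _) |- _ => case/orP: H => H
  | H : is_true (_ && _) |- _ => let H1 := fresh "H" in case/andP: H => H H1
  | H : is_true (_ == layer _ _) |- _ => rewrite /layer in H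
  | H : is_true ((_, _) == (_, _)) |- _ => rewrite xpair_eqE in H
  | H : is_true (?x == ?y) |- _ => move/eqP: H => H; subst
  end.

Ltac not_in := solve [apply/negP => ?; crush_membership].

(* [path_edges_disjoint] is applied with an explicit list first, so that [zip]
   computes; the only pair of paths that are both given by [rcons] share no
   vertex at all. *)
Ltac edge_disjoint :=
  lazymatch goal with
  | |- is_true [disjoint path_edges _ (_ :: _) & _] => idtac
  | _ => rewrite disjoint_sym
  end;
  first [ solve [apply: (@path_edges_disjoint (cart _ _)) => /=; rewrite ?andbT;
                 repeat (apply/andP; split); apply/orP; first [left; not_in | right; not_in]]
        | apply/(@path_edges_disjoint_vertices (cart _ _))/disjoint_seq => -[? ?] ? ?;
          crush_membership ].

Section OddCycleTimesPath.
Variables (G H : sgraph) (a b c : G) (m : seq G) (h1 h2 h3 : H).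
Hypotheses (nab : a != b) (nac : a != c) (nbc : b != c).
Hypotheses (nam : a \notin m) (nbm : b \notin m) (ncm : c \notin m) (uniq_m : uniq m).
Hypotheses (path_am : path (@adj G) a (rcons m c)) (cb : adj c b) (ba : adj b a).
Hypotheses (even_m : ~~ odd (size m)) (h12 : adj h1 h2) (h23 : adj h2 h3) (h13 : h1 != h3).

Local Notation A := ((a, h1) : cart G H).
Local Notation B := ((a, h2) : cart G H).
Local Notation C := ((b, h1) : cart G H).
Local Notation D := ((c, h1) : cart G H).
Local Notation AD := (rcons (map (layer h1) m) D).
Local Notation BC := (rcons (map (layer h2) (rcons (rcons m c) b)) C).
Local Notation BD := [:: ((a, h3) : cart G H); (b, h3); (c, h3); (c, h2); D].
Local Notation paths := [:: (A, B, [:: B]); (A, C, [:: C]); (A, D, AD);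
                           (B, C, BC); (B, D, BD); (C, D, [:: D])].

Lemma terminals_uniq : uniq [:: A; B; C; D].
Proof.
have nh12 := adj_neq h12.
by rewrite /= !andbT; repeat (apply/andP; split); not_in.
Qed.

Lemma paths_odd : all (fun t => odd_path t.1.1 t.1.2 t.2) paths.
Proof.
have nh12 := adj_neq h12; have nh23 := adj_neq h23.
have ab : adj a b by rewrite adj_sym.
have bc : adj b c by rewrite adj_sym.
have h21 : adj h2 h1 by rewrite adj_sym.
have h32 : adj h3 h2 by rewrite adj_sym.
have path_ac : is_path a c (rcons m c).
  rewrite /is_path path_am last_rcons eqxx -rcons_cons rcons_uniq /= uniq_m nam !andbT.
  by not_in.
have path_ab : is_path a b (rcons (rcons m c) b) by apply: is_path_rcons path_ac cb _; not_in.
have odd_AD : odd_path A D AD.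
  rewrite /odd_path -[D]/(layer h1 c) -map_rcons size_map size_rcons /= even_m andbT.
  exact: is_path_map (@layer_inj G H h1) (@layer_adj G H h1) _ _ _ path_ac.
have odd_BC : odd_path B C BC.
  rewrite /odd_path size_rcons size_map !size_rcons /= even_m andbT.
  apply: is_path_rcons (is_path_map (@layer_inj G H h2) (@layer_adj G H h2) path_ab) _ _.
    by rewrite /= /cart_adj /= eqxx h21.
  by not_in.
have odd_BD : odd_path B D BD.
  rewrite /odd_path /is_path /= /cart_adj /= !eqxx ab bc h23 h32 h21 !orbT /= andbT.
  by repeat (apply/andP; split) => //; not_in.
by rewrite /= odd_AD odd_BC odd_BD !odd_path_edge // /= /cart_adj /= eqxx ?h12 ?ab ?bc ?orbT.
Qed.

Lemma paths_edge_disjoint :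
  pairwise (fun s t => [disjoint path_edges s.1.1 s.2 & path_edges t.1.1 t.2]) paths.
Proof.
have nh12 := adj_neq h12; have nh23 := adj_neq h23.
by rewrite /= !andbT; repeat (apply/andP; split); edge_disjoint.
Qed.

Lemma terminals_not_interior :
  all (fun t => [disjoint [:: A; B; C; D] & interior t.1.1 t.2]) paths.
Proof.
have nh12 := adj_neq h12; have nh23 := adj_neq h23.
rewrite /= !interior_rcons /interior /= !andbT; repeat (apply/andP; split);
  by apply: disjoint_seq => -[? ?] ? ?; crush_membership.
Qed.

Lemma cart_toi_immersion4 : toi_immersion (cart G H) 4.
Proof.
exact: toi_immersion4 terminals_uniq paths_odd paths_edge_disjoint terminals_not_interior.
Qed.

End OddCycleTimesPath.

Lemma toi_cart_odd_cycle_path3 (G H : sgraph) (a b c : G) (m : seq G) (h1 h2 h3 : H) :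
  [&& uniq [:: a, b, c & m], path (@adj G) a (rcons m c), adj c b, adj b a
    & ~~ odd (size m)] ->
  [&& adj h1 h2, adj h2 h3 & h1 != h3] -> 4 <= toi (cart G H).
Proof.
case/and5P=> + path_am cb ba even_m /and3P [h12 h23 h13].
rewrite /= !inE !negb_or => /and4P [/and3P [nab nac nam] /andP [nbc nbm] ncm uniq_m].
apply/toi_immersionP.
exact: cart_toi_immersion4 nab nac nbc nam nbm ncm uniq_m path_am cb ba even_m h12 h23 h13.
Qed.

(** * The prism K_3 □ K_2 *)

Lemma count_le1 (T : eqType) (a : pred T) (s : seq T) :
  uniq s -> {in s &, forall x y, a x -> a y -> x = y} -> count a s <= 1.
Proof.
move=> uniq_s a_eq; rewrite -size_filter.
have := filter_uniq a uniq_s; have mem_f := mem_filter a ^~ s.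
case: (filter a s) mem_f => [|x [|y r]] // mem_f /andP [].
have /andP [ax xs] : a x && (x \in s) by rewrite -mem_f mem_head.
have /andP [ay ys] : a y && (y \in s) by rewrite -mem_f !inE eqxx orbT.
by rewrite inE (a_eq x y) ?eqxx.
Qed.

(* The first two interior vertices lie outside T, so they are the two vertices of ~: T. *)
Lemma odd_path_nonadj_edge (G : sgraph) (T : {set G}) (x y : G) p :
  #|~: T| = 2 -> ~~ adj x y -> is_path x y p -> odd (size p) ->
  {subset interior x p <= ~: T} -> ~: T \in path_edges x p.
Proof.
move=> cardT nxy /and3P [path_p uniq_p /eqP last_p] odd_p int_T.
case: p path_p uniq_p last_p odd_p int_T => [|p1 [|p2 [|p3 r]]] //=.
  by rewrite andbT => xp1 _ p1y; move: nxy; rewrite -p1y xp1.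
move=> _ /andP [_ /andP [p2_r _]] _ _ int_T.
have p12 : p1 != p2 by apply: contraNneq p2_r => <-; rewrite mem_head.
suff -> : ~: T = [set p1; p2] by rewrite !inE eqxx orbT.
apply/eqP; rewrite eq_sym eqEcard cardT cards2 p12 andbT.
by apply/subsetP => v /set2P [] ->; apply: int_T; rewrite !inE eqxx ?orbT.
Qed.

Local Notation prism := (cart (K 3) (K 2)).
Local Notation vertex i j := ((@Ordinal 3 i isT, @Ordinal 2 j isT) : prism).

Definition prism_vertices : seq prism :=
  [:: vertex 0 0; vertex 0 1; vertex 1 0; vertex 1 1; vertex 2 0; vertex 2 1].

Lemma mem_prism_vertices (x : prism) : x \in prism_vertices.
Proof. by case: x => [[[|[|[|?]]] ?] [[|[|?]] ?]]. Qed.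

Lemma prism_nonadjacent4 (w0 w1 w2 w3 : prism) : uniq [:: w0; w1; w2; w3] ->
  1 < count negb [:: adj w0 w1; adj w0 w2; adj w0 w3; adj w1 w2; adj w1 w3; adj w2 w3].
Proof.
have: all (fun w0 => all (fun w1 => all (fun w2 => all (fun w3 =>
        uniq [:: w0; w1; w2; w3] ==> (1 < count negb
          [:: adj w0 w1; adj w0 w2; adj w0 w3; adj w1 w2; adj w1 w3; adj w2 w3]))
      prism_vertices) prism_vertices) prism_vertices) prism_vertices by vm_compute.
move=> /allP /(_ w0 (mem_prism_vertices _)) /allP /(_ w1 (mem_prism_vertices _)).
by move=> /allP /(_ w2 (mem_prism_vertices _)) /allP /(_ w3 (mem_prism_vertices _)) /implyP.
Qed.

Local Notation ord4 k := (@Ordinal 4 k isT).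

Definition pairs4 : seq ('I_4 * 'I_4) :=
  [:: (ord4 0, ord4 1); (ord4 0, ord4 2); (ord4 0, ord4 3);
      (ord4 1, ord4 2); (ord4 1, ord4 3); (ord4 2, ord4 3)].

Lemma prism_no_toi_immersion4 : ~ toi_immersion prism 4.
Proof.
case=> f [P [f_inj [Hp [Hd Hi]]]].
pose T := f @: 'I_4.
have cardT : #|~: T| = 2.
  by rewrite cardsCs setCK card_imset // card_ord card_prod !card_ord.
have pairs4_lt : {in pairs4, forall p : 'I_4 * 'I_4, p.1 < p.2} by apply/allP.
have uses p : p \in pairs4 -> ~~ adj (f p.1) (f p.2) -> ~: T \in path_edges (f p.1) (P p.1 p.2).
  move=> /pairs4_lt lt_p nadj_p; have [path_p odd_p] := Hp _ _ lt_p.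
  apply: (odd_path_nonadj_edge cardT nadj_p path_p odd_p) => v v_int.
  rewrite inE; apply/imsetP => -[k _ v_fk].
  by move: (Hi _ _ k lt_p); rewrite -v_fk v_int.
have : count (fun p => ~~ adj (f p.1) (f p.2)) pairs4 <= 1.
  apply: count_le1 => // p q p_in q_in nadj_p nadj_q; apply/eqP/negPn/negP => pq.
  have := Hd _ _ _ _ (pairs4_lt _ p_in) (pairs4_lt _ q_in).
  by rewrite -!surjective_pairing => /(_ pq _ (uses _ p_in nadj_p)); rewrite uses.
rewrite leqNgt => /negP; apply; apply: prism_nonadjacent4.
by rewrite /= !inE !(inj_eq f_inj).
Qed.

Theorem mainTheorem7 :
  (forall G H : sgraph,
     connected G -> connected H -> toi G = 3 -> toi H = 2 ->
     3 <= toi (cart G H) /\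
     (~ isomorphic H (K 2) -> 4 <= toi (cart G H)))
  /\ toi (cart (K 3) (K 2)) = 3.
Proof.
split=> [G H _ conH toiG toiH | ]; last first.
  apply/eqP; rewrite eqn_leq; apply/andP; split.
    by rewrite leqNgt; apply/negP => /toi_immersionP /prism_no_toi_immersion4.
  by apply: leq_trans _ (@toi_leq_cart (K 3) (K 2) ord0); apply/toi_immersionP/toi_immersion_K.
have [u [v uv]] : exists u v : H, adj u v by apply: toi_edge; rewrite toiH.
split=> [|notK2]; first by rewrite -toiG (toi_leq_cart _ u).
have /toi_immersionP : 3 <= toi G by rewrite toiG.
case/toi_immersion3_odd_closed_walk=> x [p /odd_cycle_of_closed_walk [a [b [c [m cycle]]]]].
have [h1 [h2 [h3 path3]]] := connected_path3 conH uv notK2.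
exact: toi_cart_odd_cycle_path3 cycle path3.
Qed.
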